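(* Let $\mu$ be a partition of $n+k$ and $(i,j)$ a cell of $\mu$. Define $$I^k_{i,j}=\{P\in\mathbb{Q}[X_n,Y_n]: P(\partial)Q=0\ \text{for all } Q\in M^k_{i,j}\}.$$ Then $$I^k_{i,j}=\bigcap_{(a_1,b_1),\dots,(a_k,b_k)} I_{\partial x_{n+1}^{a_1}\partial y_{n+1}^{b_1}\cdots\partial x_{n+k}^{a_k}\partial y_{n+k}^{b_k}\Delta_\mu}\ \cap\ \mathbb{Q}[X_n,Y_n],$$ where the intersection runs over all $k$-tuples of distinct cells of $S_\mu(i,j)$ listed in increasing order. Here $\Delta_\mu=\Delta_\mu(X_{n+k},Y_{n+k})$, and for a polynomial $R\in\mathbb{Q}[X_{n+k},Y_{n+k}]$, $I_R$ denotes the set of $P\in\mathbb{Q}[X_{n+k},Y_{n+k}]$ such that $P(\partial)$ kills every partial derivative of $R$.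
   Context: Write $X_m=(x_1,\dots,x_m)$ and $Y_m=(y_1,\dots,y_m)$. For a partition $\mu=(\mu_1\ge\dots\ge\mu_h>0)$, its Ferrers diagram is $\{(a,b):0\le a\le h-1,\ 0\le b\le\mu_{a+1}-1\}$. Cells are ordered by $(p,q)<(p',q')$ iff $q<q'$, or $q=q'$ and $p<p'$. For a lattice diagram $L$ (a finite subset of $\mathbb{N}^2$) with cells $(p_1,q_1)<\dots<(p_m,q_m)$, set $\Delta_L=\det(x_r^{p_t}y_r^{q_t})_{1\le r,t\le m}\in\mathbb{Q}[X_m,Y_m]$, and let $M_L$ be the span of all partial derivatives of $\Delta_L$. For a polynomial $P$, $P(\partial)$ substitutes $\partial/\partial x_r$ and $\partial/\partial y_r$ for $x_r$ and $y_r$. The shadow is $S_\mu(i,j)=\{(a,b)\in\mu:a\ge i,\ b\ge j\}$. The space $M^k_{i,j}=\sum M_{\mu\setminus\{c_1,\dots,c_k\}}\subseteq\mathbb{Q}[X_n,Y_n]$, summed over all sets of $k$ distinct cells of $S_\mu(i,j)$. *)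

From HB Require Import structures.
From mathcomp Require Import all_boot all_algebra.
From mathcomp Require Import mpoly.
Import GRing.Theory.
Local Open Scope ring_scope.

(* Q[X_N, Y_N]: variables indexed by 'I_(N+N); x_r = 'X_(lshift N r), y_r = 'X_(rshift N r) *)
Definition QXY (N : nat) := {mpoly rat[N + N]}.
Definition xv (N : nat) (r : 'I_N) : QXY N := 'X_(lshift N r).
Definition yv (N : nat) (r : 'I_N) : QXY N := 'X_(rshift N r).

(* P(d) Q : substitute d/dx_r, d/dy_r for x_r, y_r in P and apply to Q *)
Definition diffop (N : nat) (P Q : QXY N) : QXY N :=
  \sum_(m <- msupp P) P@_m *: mderivm m Q.

Definition cell := (nat * nat)%type.
Definition cell_lt (c d : cell) : bool :=
  (c.2 < d.2)%N || ((c.2 == d.2) && (c.1 < d.1)%N).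
Definition cell_le (c d : cell) : bool := cell_lt c d || (c == d).

(* Delta_L in Q[X_N, Y_N] for a lattice diagram L (a duplicate-free list of
   cells) with N cells: det (x_r^{p_t} y_r^{q_t}), cells sorted increasingly *)
Definition Delta (N : nat) (L : seq cell) : QXY N :=
  let sL := sort cell_le L in
  \det (\matrix_(r < N, t < N)
          (xv N r ^+ (nth (0%N, 0%N) sL t).1 * yv N r ^+ (nth (0%N, 0%N) sL t).2)).

Definition in_span_derivs (N : nat) (D Q : QXY N) : Prop :=
  exists s : seq ('X_{1..N + N} * rat), Q = \sum_(e <- s) e.2 *: mderivm e.1 D.

Definition is_partition (mu : seq nat) (m : nat) : bool :=
  [&& sorted geq mu, all (fun x => 0 < x)%N mu & sumn mu == m].

Definition ferrers (mu : seq nat) : seq cell :=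
  [seq (a, b) | a <- iota 0 (size mu), b <- iota 0 (nth 0%N mu a)].

Definition shadow (mu : seq nat) (i j : nat) : seq cell :=
  [seq c <- ferrers mu | (i <= c.1)%N && (j <= c.2)%N].

Definition kcells (S : seq cell) (k : nat) (cs : seq cell) : bool :=
  [&& sorted cell_lt cs, size cs == k & all (fun c => c \in S) cs].

Definition remove_cells (L cs : seq cell) : seq cell := [seq c <- L | c \notin cs].

(* M^k_{i,j} = sum of M_{mu \ {c_1..c_k}} over k-subsets of S_mu(i,j), in Q[X_n,Y_n] *)
Definition inMk (n : nat) (mu : seq nat) (i j k : nat) (Q : QXY n) : Prop :=
  exists s : seq (seq cell * QXY n),
    (forall e, e \in s -> kcells (shadow mu i j) k e.1 /\
         in_span_derivs n (Delta n (remove_cells (ferrers mu) e.1)) e.2)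
    /\ Q = \sum_(e <- s) e.2.

Definition Ik (n : nat) (mu : seq nat) (i j k : nat) (P : QXY n) : Prop :=
  forall Q, inMk n mu i j k Q -> diffop n P Q = 0.

Definition inI (N : nat) (R P : QXY N) : Prop :=
  forall m : 'X_{1..N + N}, diffop N P (mderivm m R) = 0.

Definition embed (n k : nat) (P : QXY n) : QXY (n + k) :=
  mmap (fun c : rat => c%:MP)
    (fun v : 'I_(n + n) => match split v with
                          | inl r => xv (n + k) (lshift k r)
                          | inr r => yv (n + k) (lshift k r) end) P.

(* multi-index of d x_{n+1}^{a_1} d y_{n+1}^{b_1} ... d x_{n+k}^{a_k} d y_{n+k}^{b_k},
   where cs = [:: (a_1,b_1); ...; (a_k,b_k)] *)
Definition tuple_mono (n k : nat) (cs : seq cell) : 'X_{1..(n + k) + (n + k)} :=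
  [multinom (match split i with
             | inl r => if (n <= r)%N then (nth (0%N, 0%N) cs (r - n)).1 else 0%N
             | inr r => if (n <= r)%N then (nth (0%N, 0%N) cs (r - n)).2 else 0%N
             end) | i < (n + k) + (n + k)].

(* Split the variables of Q[X_{n+k},Y_{n+k}] into the old ones x_r, y_r (r < n) and the new
   ones x_{n+1}, y_{n+1}, ..., x_{n+k}, y_{n+k}, and expand every polynomial Z along the monomials
   w in the new variables, with coefficients coef_tail w Z in Q[X_n,Y_n].  An operator P(d) with
   P in Q[X_n,Y_n] only differentiates in the old variables, so it commutes with taking these
   coefficients: P(d) kills all derivatives of R iff it kills the coefficients of all derivatives
   of R.  Expanding Delta_mu along its last k rows, the coefficient of
   x_{n+1}^{a_1} y_{n+1}^{b_1} ... x_{n+k}^{a_k} y_{n+k}^{b_k} is +-Delta_{mu \ {(a_s, b_s)}} when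
   the (a_s, b_s) are distinct cells of mu, and 0 otherwise.  Differentiating in the new
   variables only raises these exponents, which keeps the cells in the shadow S_mu(i,j). *)

From HB Require Import structures.
From mathcomp Require Import all_boot all_algebra fingroup perm mpoly zify.
Import GRing.Theory.
Local Open Scope ring_scope.

Lemma ord_split_ind m n (P : 'I_(m + n) -> Prop) :
  (forall r, P (lshift n r)) -> (forall r, P (rshift m r)) -> forall i, P i.
Proof. by move=> Pl Pr i; rewrite -(splitK i); case: (split i). Qed.

Lemma split_lshift m n (r : 'I_m) : split (lshift n r) = inl r.
Proof. exact: (unsplitK (inl r)). Qed.

Lemma split_rshift m n (r : 'I_n) : split (rshift m r) = inr r.
Proof. exact: (unsplitK (inr r)). Qed.

Ltac simpl_split :=
  repeat progress rewrite ?mnmE ?mnmDE ?split_lshift ?split_rshift /=.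

Lemma cell_lt_irr : irreflexive cell_lt.
Proof. by move=> [a b]; rewrite /cell_lt /=; lia. Qed.

Lemma cell_lt_trans : transitive cell_lt.
Proof. by move=> [a b] [c d] [e f]; rewrite /cell_lt /=; lia. Qed.

Lemma cell_le_total : total cell_le.
Proof. by move=> [a b] [c d]; rewrite /cell_le /cell_lt /= !xpair_eqE; lia. Qed.

Lemma cell_le_trans : transitive cell_le.
Proof. by move=> [a b] [c d] [e f]; rewrite /cell_le /cell_lt /= !xpair_eqE; lia. Qed.

Lemma sort_cell_lt_sorted s : uniq s -> sorted cell_lt (sort cell_le s).
Proof.
rewrite -(sort_uniq cell_le) uniq_pairwise sorted_pairwise; last exact: cell_lt_trans.
have := sort_sorted cell_le_total s; rewrite sorted_pairwise; last exact: cell_le_trans.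
elim: (sort cell_le s) => //= x t IH /andP[le_x le_t] /andP[ne_x ne_t].
rewrite IH // andbT; apply/allP => y yt.
case/orP: (allP le_x y yt) => // /eqP xy.
by move: (allP ne_x y yt); rewrite /= xy eqxx.
Qed.

Lemma ferrers_uniq mu : uniq (ferrers mu).
Proof.
apply: allpairs_uniq_dep => [|a _|[a b] [c d] _ _ /= [-> ->]] //; exact: iota_uniq.
Qed.

Lemma size_ferrers mu : size (ferrers mu) = sumn mu.
Proof.
rewrite size_allpairs_dep (eq_map (fun a => size_iota 0 _)).
by rewrite map_nth_iota0 // take_size.
Qed.

Lemma size_ferrers_partition mu N : is_partition mu N -> size (ferrers mu) = N.
Proof. by case/and3P=> _ _ /eqP <-; exact: size_ferrers. Qed.

Lemma remove_cells_sort L D : remove_cells L (sort cell_le D) = remove_cells L D.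
Proof. by apply: eq_filter => c; rewrite mem_sort. Qed.

Lemma shadow_up mu i j c d : c \in shadow mu i j -> d \in ferrers mu ->
  (c.1 <= d.1)%N -> (c.2 <= d.2)%N -> d \in shadow mu i j.
Proof.
rewrite !mem_filter => /andP[/andP[ic jc] _] d_mu cd1 cd2.
by rewrite d_mu (leq_trans ic cd1) (leq_trans jc cd2).
Qed.

Definition xy_mnm {N} (f : 'I_N -> cell) : 'X_{1..N + N} :=
  [multinom match split i with inl r => (f r).1 | inr r => (f r).2 end | i < N + N].

Lemma mpolyX_xy_mnm N (f : 'I_N -> cell) :
  'X_[xy_mnm f] = \prod_r (xv N r ^+ (f r).1 * yv N r ^+ (f r).2) :> QXY N.
Proof.
rewrite mpolyXE_id big_split_ord big_split /=.
by congr (_ * _); apply: eq_bigr => r _; simpl_split.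
Qed.

Lemma DeltaE N L : Delta N L =
  \sum_(s : 'S_N) (-1) ^+ s *: 'X_[xy_mnm (fun r => nth (0%N, 0%N) (sort cell_le L) (s r))].
Proof.
apply: eq_bigr => s _; rewrite scaler_sign -mulr_sign mpolyX_xy_mnm.
by congr (_ * _); apply: eq_bigr => r _; rewrite mxE.
Qed.

Lemma diffop_is_linear N (P : QXY N) : linear (diffop N P).
Proof.
move=> c Q1 Q2; rewrite /diffop scaler_sumr -big_split; apply: eq_bigr => m _.
by rewrite linearP scalerDr !scalerA mulrC.
Qed.

HB.instance Definition _ N (P : QXY N) :=
  GRing.isLinear.Build rat (QXY N) (QXY N) _ (diffop N P) (@diffop_is_linear N P).

Lemma diffop_widen N (P Q : QXY N) (r : seq 'X_{1..N + N}) :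
  uniq r -> {subset msupp P <= r} -> diffop N P Q = \sum_(m <- r) P@_m *: Q^`M[m].
Proof.
move=> ur sPr; rewrite [RHS](bigID (mem (msupp P))) /= [X in _ + X]big1 ?addr0; last first.
  by move=> m /memN_msupp_eq0 ->; rewrite scale0r.
rewrite -big_filter; apply/perm_big/uniq_perm; rewrite ?filter_uniq ?msupp_uniq //.
by move=> m; rewrite mem_filter andb_idr //; apply: sPr.
Qed.

Section UnitRows.

Variables (n k : nat) (tau : 'I_k -> 'I_(n + k)).
Hypothesis tau_inj : injective tau.

Definition compl_seq := [seq t <- enum 'I_(n + k) | t \notin codom tau].

Definition compl_enum (j : 'I_n) : 'I_(n + k) := nth (lshift k j) compl_seq j.

Lemma size_compl_seq : size compl_seq = n.
Proof.
have : count (fun t => t \in codom tau) (enum 'I_(n + k)) +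
       count (fun t => t \notin codom tau) (enum 'I_(n + k)) = (n + k)%N.
  by rewrite -[RHS](size_enum_ord (n + k)) -(count_predC (mem (codom tau))).
rewrite size_filter.
suff -> : count (fun t => t \in codom tau) (enum 'I_(n + k)) = #|codom tau|.
  by rewrite card_codom // card_ord; lia.
rewrite -size_filter cardE.
apply/perm_size/uniq_perm => [||t]; first exact/filter_uniq/enum_uniq.
- exact: enum_uniq.
- by rewrite mem_filter !mem_enum andbT.
Qed.

Lemma compl_enum_notin j : compl_enum j \notin codom tau.
Proof.
have : compl_enum j \in compl_seq by rewrite mem_nth // size_compl_seq.
by rewrite mem_filter => /andP[].
Qed.

Lemma compl_enum_inj : injective compl_enum.
Proof.
move=> j1 j2; rewrite /compl_enum (set_nth_default (lshift k j1) (lshift k j2)) ?size_compl_seq //.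
move/eqP; rewrite nth_uniq ?size_compl_seq //; first by move/eqP/val_inj.
exact/filter_uniq/enum_uniq.
Qed.

Lemma det_unit_rows (R : comRingType) (A : 'M[R]_(n + k)) :
    (forall s t, A (rshift n s) t = (t == tau s)%:R) ->
  exists b : bool, \det A = (-1) ^+ b * \det (\matrix_(r, j) A (lshift k r) (compl_enum j)).
Proof.
move=> A_tail.
pose pi (t : 'I_(n + k)) := match split t with inl j => compl_enum j | inr s => tau s end.
have pi_inj : injective pi.
  move=> t1 t2; rewrite -(splitK t1) -(splitK t2) /pi.
  case: (split t1) (split t2) => [a|a] [b|b] /=; simpl_split.
  - by move/compl_enum_inj ->.
  - by move=> E; move: (compl_enum_notin a); rewrite E codom_f.
  - by move=> E; move: (compl_enum_notin b); rewrite -E codom_f.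
  - by move/tau_inj ->.
pose p : 'S_(n + k) := perm pi_inj.
pose Aur := \matrix_(r, s) A (lshift k r) (tau s).
have Ablock : col_perm p A = block_mx (\matrix_(r, j) A (lshift k r) (compl_enum j)) Aur 0 1%:M.
  apply/matrixP => r c; rewrite mxE permE /pi -(splitK r) -(splitK c).
  case: (split r) (split c) => [a|a] [b|b] /=;
    rewrite ?block_mxEul ?block_mxEur ?block_mxEdl ?block_mxEdr !mxE; simpl_split => //.
  - by rewrite A_tail; case: eqP => // E; move: (compl_enum_notin b); rewrite E codom_f.
  - by rewrite A_tail (inj_eq tau_inj) eq_sym.
exists (odd_perm (p^-1)%g); apply: (canRL (signrMK _)).
by rewrite -det_perm mulrC -det_mulmx -col_permE Ablock det_ublock det1 mulr1.
Qed.

Lemma nth_compl_enum (T : eqType) (x0 : T) (s : seq T) (D : pred T) :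
    size s = (n + k)%N -> (forall t, (t \in codom tau) = D (nth x0 s t)) ->
  forall j, nth x0 s (compl_enum j) = nth x0 [seq c <- s | ~~ D c] j.
Proof.
move=> size_s tauD j.
have map_s : map (fun t : 'I_(n + k) => nth x0 s t) (enum 'I_(n + k)) = s.
  by rewrite -[RHS](mkseq_nth x0) /mkseq size_s -val_enum_ord -map_comp.
rewrite -[in RHS]map_s filter_map (@eq_filter _ _ (fun t => t \notin codom tau)) => [|t].
  by rewrite -/compl_seq (nth_map (lshift k j)) ?size_compl_seq.
by rewrite /= tauD.
Qed.

End UnitRows.

Section NewVariables.

Variables n k : nat.
Local Notation mnm := 'X_{1..(n + k) + (n + k)}.

Definition lift_var (v : 'I_(n + n)) : 'I_((n + k) + (n + k)) :=
  match split v with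
  | inl r => lshift (n + k) (lshift k r)
  | inr r => rshift (n + k) (lshift k r)
  end.

Definition old_var (i : 'I_((n + k) + (n + k))) : bool :=
  match split i with inl r | inr r => if split r is inl _ then true else false end.

Definition mhead (m : mnm) : 'X_{1..n + n} := [multinom m (lift_var v) | v < n + n].

Definition mtail (m : mnm) : mnm := [multinom if old_var i then 0%N else m i | i < _].

Definition mlift (e : 'X_{1..n + n}) : mnm :=
  [multinom match split i with
            | inl r => if split r is inl r0 then e (lshift n r0) else 0%N
            | inr r => if split r is inl r0 then e (rshift n r0) else 0%N
            end | i < _].

Lemma old_varP (P : 'I_((n + k) + (n + k)) -> Prop) :
  (forall v, P (lift_var v)) -> (forall i, ~~ old_var i -> P i) -> forall i, P i.
Proof.
move=> Pold Pnew i; rewrite -(splitK i).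
case: (split i) => r; rewrite -(splitK r); case: (split r) => r0 /=.
- by have := Pold (lshift n r0); rewrite /lift_var split_lshift.
- by apply: Pnew; rewrite /old_var; simpl_split.
- by have := Pold (rshift n r0); rewrite /lift_var split_rshift.
- by apply: Pnew; rewrite /old_var; simpl_split.
Qed.

Lemma old_var_lift v : old_var (lift_var v).
Proof. by rewrite /old_var /lift_var; case: (split v) => r; simpl_split. Qed.

Lemma mlift_lift_var e v : mlift e (lift_var v) = e v.
Proof.
by rewrite /lift_var -[in RHS](splitK v); case: (split v) => r; rewrite /mlift; simpl_split.
Qed.

Lemma mlift_new e i : ~~ old_var i -> mlift e i = 0%N.
Proof.
elim/old_varP: i => [v|i]; first by rewrite old_var_lift.
rewrite /old_var /mlift mnmE; case: (split i) => r; by case: (split r).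
Qed.

Lemma mtail_lift_var m v : mtail m (lift_var v) = 0%N.
Proof. by rewrite mnmE old_var_lift. Qed.

Lemma mtail_new m i : ~~ old_var i -> mtail m i = m i.
Proof. by rewrite mnmE => /negbTE ->. Qed.

Lemma mnm_head_tail m : m = (mlift (mhead m) + mtail m)%MM.
Proof.
apply/mnmP; elim/old_varP => [v|i new_i]; rewrite mnmDE.
  by rewrite mlift_lift_var mtail_lift_var addn0 mnmE.
by rewrite mlift_new // mtail_new.
Qed.

Lemma mhead_lift e m : mhead (mlift e + mtail m) = e.
Proof. by apply/mnmP => v; rewrite mnmE mnmDE mlift_lift_var mtail_lift_var addn0. Qed.

Lemma mtailD m1 m2 : mtail (m1 + m2) = (mtail m1 + mtail m2)%MM.
Proof. by apply/mnmP => i; rewrite !(mnmE, mnmDE); case: (old_var i). Qed.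

Lemma mtail_lift e : mtail (mlift e) = 0%MM.
Proof.
apply/mnmP => i; rewrite mnmE mnm0E; case: ifP => // /negbT; exact: mlift_new.
Qed.

Lemma mtailK m : mtail (mtail m) = mtail m.
Proof. by apply/mnmP => i; rewrite !mnmE; case: (old_var i). Qed.

Lemma mliftD e1 e2 : mlift (e1 + e2) = (mlift e1 + mlift e2)%MM.
Proof.
apply/mnmP; elim/old_varP => [v|i new_i]; rewrite mnmDE.
  by rewrite !mlift_lift_var mnmDE.
by rewrite !mlift_new.
Qed.

Lemma mlift_inj : injective mlift.
Proof.
by move=> e1 e2 E; rewrite -(mhead_lift e1 0) -(mhead_lift e2 0) E.
Qed.

Lemma mnm_eq_lift_tail m e w :
  (m == mlift e + mtail w)%MM = (mtail m == mtail w) && (mhead m == e).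
Proof.
apply/eqP/andP => [->|[/eqP <- /eqP <-]]; last exact: mnm_head_tail.
by rewrite mhead_lift mtailD mtail_lift mtailK add0m.
Qed.

Lemma big_old_vars R (idx : R) (op : Monoid.com_law idx) (F : 'I_((n + k) + (n + k)) -> R) :
  (forall i, ~~ old_var i -> F i = idx) ->
  \big[op/idx]_i F i = \big[op/idx]_v F (lift_var v).
Proof.
move=> F_new; rewrite big_split_ord [in RHS]big_split_ord !big_split_ord /=.
rewrite [X in op (op _ X) _]big1 => [|s _]; last by apply: F_new; rewrite /old_var; simpl_split.
rewrite [X in op _ (op _ X)]big1 => [|s _]; last by apply: F_new; rewrite /old_var; simpl_split.
by rewrite !Monoid.mulm1 /lift_var; congr (op _ _); apply: eq_bigr => r _; simpl_split.
Qed.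

(* Z = \sum_w coef_tail w Z * 'X_[mtail w], summing over the monomials w in the new variables. *)
Definition coef_tail (w : mnm) (Z : QXY (n + k)) : QXY n :=
  \sum_(m <- msupp Z | mtail m == mtail w) Z@_m *: 'X_[mhead m].

Lemma mcoeff_coef_tail w Z e : (coef_tail w Z)@_e = Z@_(mlift e + mtail w).
Proof.
rewrite {2}[Z]mpolyE !raddf_sum /= big_mkcond /=; apply: eq_bigr => m _.
rewrite !mcoeffZ !mcoeffX mnm_eq_lift_tail.
by case: (mtail m == mtail w); rewrite ?mcoeff0 ?mulr0.
Qed.

Lemma coef_tail_is_linear w : linear (coef_tail w).
Proof.
by move=> c Z1 Z2; apply/mpolyP => e; rewrite !(mcoeffD, mcoeffZ, mcoeff_coef_tail).
Qed.

HB.instance Definition _ w :=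
  GRing.isLinear.Build rat (QXY (n + k)) (QXY n) _ (coef_tail w) (coef_tail_is_linear w).

Lemma coef_tail_eq0 Z : (forall w, coef_tail w Z = 0) -> Z = 0.
Proof.
move=> Z0; apply/mpolyP => m; rewrite mcoeff0 (mnm_head_tail m).
by rewrite -mcoeff_coef_tail Z0 mcoeff0.
Qed.

Lemma coef_tail_mderiv_lift w Z e :
  coef_tail w (Z^`M[mlift e]) = (coef_tail w Z)^`M[e].
Proof.
apply/mpolyP => e'; rewrite mcoeff_coef_tail !mcoeff_mderivm mcoeff_coef_tail.
rewrite mliftD addmA; congr (_ *+ _).
rewrite (@big_old_vars _ 1%N muln) => [|i new_i]; last by rewrite mlift_new ?ffactn0.
by apply: eq_bigr => v _; rewrite !mnmDE !mlift_lift_var mtail_lift_var addn0.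
Qed.

Lemma coef_tail_mderiv_tail u v Z : mtail v = v ->
  coef_tail u (Z^`M[v]) =
  (\prod_i ((v + mtail u)%MM i)^_(v i))%:R *: coef_tail (u + v) Z.
Proof.
move=> tail_v; apply/mpolyP => e; rewrite mcoeffZ !mcoeff_coef_tail mcoeff_mderivm.
rewrite mulr_natl mtailD tail_v; congr (_ *+ _); first by rewrite addmC addmA.
apply: eq_bigr; elim/old_varP => [w|i new_i] _; rewrite !mnmDE; last by rewrite mlift_new.
by rewrite -tail_v mtail_lift_var !ffactn0.
Qed.

Lemma embedE P : embed n k P = \sum_(e <- msupp P) P@_e *: 'X_[mlift e].
Proof.
apply: eq_bigr => e _; rewrite mul_mpolyC; congr (_ *: _).
rewrite /mmap1 mpolyXE_id (@big_old_vars _ 1 *%R) => [|i new_i]; last first.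
  by rewrite mlift_new ?expr0.
apply: eq_bigr => v _; rewrite mlift_lift_var /lift_var /xv /yv.
by case: (split v).
Qed.

Lemma mcoeff_embed P m :
  (embed n k P)@_m = \sum_(e <- msupp P) P@_e * (mlift e == m)%:R.
Proof. by rewrite embedE raddf_sum; apply: eq_bigr => e _; rewrite /= mcoeffZ mcoeffX. Qed.

Lemma mcoeff_embed_lift P e : (embed n k P)@_(mlift e) = P@_e.
Proof.
rewrite mcoeff_embed [in RHS](mpolyE P) raddf_sum /=; apply: eq_bigr => e' _.
by rewrite mcoeffZ mcoeffX (inj_eq mlift_inj).
Qed.

Lemma msupp_embed P : {subset msupp (embed n k P) <= map mlift (msupp P)}.
Proof.
move=> m; rewrite mcoeff_msupp mcoeff_embed; apply: contraR => m_notin.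
rewrite big_seq big1 // => e e_supp; case: eqP; rewrite ?mulr0 // => em.
by move: m_notin; rewrite -em map_f.
Qed.

Lemma diffop_embed P Z :
  diffop (n + k) (embed n k P) Z = \sum_(e <- msupp P) P@_e *: Z^`M[mlift e].
Proof.
have uniq_lift : uniq (map mlift (msupp P)).
  by rewrite map_inj_uniq ?msupp_uniq //; exact: mlift_inj.
rewrite (diffop_widen _ _ _ _ uniq_lift (@msupp_embed P)).
by rewrite big_map; apply: eq_bigr => e _; rewrite mcoeff_embed_lift.
Qed.

Lemma coef_tail_diffop_embed w P Z :
  coef_tail w (diffop (n + k) (embed n k P) Z) = diffop n P (coef_tail w Z).
Proof.
rewrite diffop_embed linear_sum; apply: eq_bigr => e _.
by rewrite linearZ /= coef_tail_mderiv_lift.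
Qed.

Lemma inI_embedP R P :
  inI (n + k) R (embed n k P) <->
  (forall m w, diffop n P (coef_tail w (R^`M[m])) = 0).
Proof.
split=> [RP m w | RP m]; first by rewrite -coef_tail_diffop_embed RP linear0.
by apply: coef_tail_eq0 => w; rewrite coef_tail_diffop_embed RP.
Qed.

Definition tail_cell (w : mnm) (s : 'I_k) : cell :=
  (w (lshift (n + k) (rshift n s)), w (rshift (n + k) (rshift n s))).

Definition tail_cells w := [seq tail_cell w s | s <- enum 'I_k].

Definition Delta_tail_mx (L : seq cell) (w : mnm) : 'M[QXY n]_(n + k) :=
  \matrix_(r, t)
    let c := nth (0%N, 0%N) (sort cell_le L) t in
    match split r with
    | inl r0 => xv n r0 ^+ c.1 * yv n r0 ^+ c.2
    | inr s => (c == tail_cell w s)%:R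
    end.

Lemma tail_cell_mtail w : tail_cell (mtail w) =1 tail_cell w.
Proof. by move=> s; rewrite /tail_cell !mtail_new // /old_var; simpl_split. Qed.

Lemma coef_tail_X w m :
  coef_tail w 'X_[m] = if mtail m == mtail w then 'X_[mhead m] else 0.
Proof. by rewrite /coef_tail msuppX big_mkcond big_seq1 mcoeffX eqxx scale1r. Qed.

Lemma mtail_xy_mnm (f : 'I_(n + k) -> cell) w :
  (mtail (xy_mnm f) == mtail w) = [forall s, f (rshift n s) == tail_cell w s].
Proof.
apply/eqP/forallP => [E s | E].
  rewrite -tail_cell_mtail -E tail_cell_mtail /tail_cell.
  by simpl_split; rewrite -surjective_pairing.
apply/mnmP; elim/ord_split_ind => r; elim/ord_split_ind: r => r;
  rewrite !mnmE /old_var; simpl_split => //; by rewrite (eqP (E r)).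
Qed.

Lemma mhead_xy_mnm (f : 'I_(n + k) -> cell) :
  mhead (xy_mnm f) = xy_mnm (fun r => f (lshift k r)).
Proof. by apply/mnmP; elim/ord_split_ind => r; simpl_split; rewrite /lift_var; simpl_split. Qed.

Lemma coef_tail_Delta L w : coef_tail w (Delta (n + k) L) = \det (Delta_tail_mx L w).
Proof.
rewrite DeltaE linear_sum; apply: eq_bigr => s _ /=.
rewrite linearZ /= coef_tail_X mtail_xy_mnm mhead_xy_mnm mpolyX_xy_mnm.
rewrite scaler_sign -mulr_sign big_split_ord /=; congr (_ * _).
case: forallP => [tail_eq | /forallP/forallPn [s0 ne]].
  rewrite [X in _ * X]big1 ?mulr1 => [|s' _]; last by rewrite mxE; simpl_split; rewrite tail_eq.
  by apply: eq_bigr => r _; rewrite mxE; simpl_split.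
by rewrite [X in _ * X](bigD1 s0) //= mxE; simpl_split; rewrite (negbTE ne) mul0r mulr0.
Qed.

Lemma coef_tail_Delta_eq0 L w : size L = (n + k)%N ->
    ~~ [forall s, tail_cell w s \in L] || ~~ injectiveb (tail_cell w) ->
  coef_tail w (Delta (n + k) L) = 0.
Proof.
move=> size_L; rewrite coef_tail_Delta.
case/orP => [/forallPn [s notin_L] | /injectivePn [s1 [s2 ne12 eq12]]].
  rewrite (expand_det_row _ (rshift n s)) big1 // => t _; rewrite !mxE; simpl_split.
  case: eqP => [eq_t|]; last by rewrite mul0r.
  by move: notin_L; rewrite -eq_t -(mem_sort cell_le) mem_nth // size_sort size_L.
apply: (determinant_alternate (i1 := rshift n s1) (i2 := rshift n s2)).
  by apply: contra ne12 => /eqP /rshift_inj ->.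
by move=> t; rewrite !mxE; simpl_split; rewrite eq12.
Qed.

Lemma coef_tail_Delta_remove L w : uniq L -> size L = (n + k)%N ->
    (forall s, tail_cell w s \in L) -> injective (tail_cell w) ->
  exists b : bool,
    coef_tail w (Delta (n + k) L) = (-1) ^+ b *: Delta n (remove_cells L (tail_cells w)).
Proof.
move=> uniq_L size_L in_L inj_w; set sL := sort cell_le L.
have size_sL : size sL = (n + k)%N by rewrite size_sort.
have nth_inj (t1 t2 : 'I_(n + k)) :
    (nth (0%N, 0%N) sL t1 == nth (0%N, 0%N) sL t2) = (t1 == t2).
  by rewrite nth_uniq ?size_sL ?sort_uniq.
have index_lt s : (index (tail_cell w s) sL < n + k)%N by rewrite -size_sL index_mem mem_sort.
pose tau s := Ordinal (index_lt s).
have nth_tau s : nth (0%N, 0%N) sL (tau s) = tail_cell w s by rewrite nth_index ?mem_sort.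
have tau_inj : injective tau.
  by move=> s1 s2 /(congr1 (fun t : 'I_(n + k) => nth (0%N, 0%N) sL t)); rewrite !nth_tau => /inj_w.
rewrite coef_tail_Delta; have [|b ->] := det_unit_rows _ _ _ tau_inj _ (Delta_tail_mx L w).
  by move=> s t; rewrite mxE; simpl_split; rewrite -nth_tau nth_inj.
exists b; rewrite scaler_sign -mulr_sign; congr (_ * \det _).
apply/matrixP => r j; rewrite !mxE; simpl_split.
rewrite /remove_cells -(filter_sort cell_le_total cell_le_trans) -/sL.
rewrite (nth_compl_enum _ _ _ tau_inj _ _ _ (fun c => c \in tail_cells w) size_sL) //.
move=> t; apply/codomP/mapP => [[s ->]|[s _ eq_t]]; first by exists s; rewrite ?mem_enum ?nth_tau.
by exists s; apply/eqP; rewrite -nth_inj nth_tau eq_t.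
Qed.

Lemma mtail_tuple_mono cs : mtail (tuple_mono n k cs) = tuple_mono n k cs.
Proof.
apply/mnmP; elim/ord_split_ind => r; elim/ord_split_ind: r => r;
  rewrite !mnmE /old_var; simpl_split => //; by rewrite leqNgt ltn_ord.
Qed.

Lemma tail_cell_tuple_mono cs s : tail_cell (tuple_mono n k cs) s = nth (0%N, 0%N) cs s.
Proof. by rewrite /tail_cell !mnmE; simpl_split; rewrite leq_addr addKn -surjective_pairing. Qed.

Lemma tail_cells_tuple_mono cs : size cs = k -> tail_cells (tuple_mono n k cs) = cs.
Proof.
move=> size_cs; rewrite /tail_cells (eq_map (tail_cell_tuple_mono cs)).
by rewrite -[RHS](mkseq_nth (0%N, 0%N)) /mkseq size_cs -val_enum_ord -map_comp.
Qed.

Lemma inI_Delta_of_Ik {mu i j P cs} :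
    is_partition mu (n + k) -> Ik n mu i j k P -> kcells (shadow mu i j) k cs ->
  inI (n + k) ((Delta (n + k) (ferrers mu))^`M[tuple_mono n k cs]) (embed n k P).
Proof.
move=> /size_ferrers_partition size_L killP /and3P[_ /eqP size_cs cs_shadow].
have uniq_L := ferrers_uniq mu.
apply/inI_embedP => m w; set L := ferrers mu; set t := tuple_mono n k cs.
rewrite -mderivmDm; have -> : (t + m = (t + mtail m) + mlift (mhead m))%MM.
  by rewrite {1}(mnm_head_tail m) -addmA (addmC (mtail m)).
rewrite mderivmDm coef_tail_mderiv_lift coef_tail_mderiv_tail; last first.
  by rewrite mtailD mtail_tuple_mono mtailK.
set W := (w + (t + mtail m))%MM; set c := _%:R.
have [/andP[/forallP W_L /injectiveP W_inj]|degenerate] :=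
  boolP ([forall s, tail_cell W s \in L] && injectiveb (tail_cell W)); last first.
  by rewrite coef_tail_Delta_eq0 -?negb_and // !linear0.
have [b ->] := coef_tail_Delta_remove _ _ uniq_L size_L W_L W_inj.
set D := tail_cells W; rewrite -(remove_cells_sort L D).
set Q := mderivm _ _; apply: killP; exists [:: (sort cell_le D, Q)].
split; last by rewrite big_seq1.
move=> _ /[1!inE] /eqP -> /=.
split; last by exists [:: (mhead m, c * (-1) ^+ b)]; rewrite big_seq1 /Q scalerA linearZ.
apply/and3P; split.
- by rewrite sort_cell_lt_sorted // map_inj_uniq ?enum_uniq.
- by rewrite size_sort size_map size_enum_ord.
apply/allP => x; rewrite mem_sort => /mapP[s _ ->].
have s_cs : (s < size cs)%N by rewrite size_cs.
apply: (shadow_up _ _ _ _ _ (allP cs_shadow _ (mem_nth (0%N, 0%N) s_cs)) (W_L s));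
  by rewrite -tail_cell_tuple_mono /W /t /tail_cell /= !mnmDE; lia.
Qed.

Lemma Ik_of_inI_Delta {mu i j P} :
    is_partition mu (n + k) ->
    (forall cs, kcells (shadow mu i j) k cs ->
       inI (n + k) ((Delta (n + k) (ferrers mu))^`M[tuple_mono n k cs]) (embed n k P)) ->
  Ik n mu i j k P.
Proof.
move=> /size_ferrers_partition size_L killDelta Q [sQ [sQ_Mk ->]].
have uniq_L := ferrers_uniq mu.
rewrite linear_sum big_seq big1 // => -[cs _] /sQ_Mk /= [cs_k [sD ->]].
rewrite linear_sum big1 // => -[e a] _ /=; rewrite linearZ /=.
suff -> : diffop n P ((Delta n (remove_cells (ferrers mu) cs))^`M[e]) = 0 by rewrite scaler0.
have /inI_embedP /(_ (mlift e) 0%MM) := killDelta cs cs_k.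
case/and3P: cs_k => sorted_cs /eqP size_cs cs_shadow.
set t := tuple_mono n k cs.
rewrite coef_tail_mderiv_lift coef_tail_mderiv_tail ?mtail_tuple_mono // add0m.
have t_L s : tail_cell t s \in ferrers mu.
  have s_cs : (s < size cs)%N by rewrite size_cs.
  move: (allP cs_shadow _ (mem_nth (0%N, 0%N) s_cs)).
  by rewrite tail_cell_tuple_mono mem_filter => /andP[].
have t_inj : injective (tail_cell t).
  move=> s1 s2 /eqP; rewrite !tail_cell_tuple_mono nth_uniq ?size_cs //.
    by move/eqP/val_inj.
  exact: (sorted_uniq cell_lt_trans cell_lt_irr sorted_cs).
have [b ->] := coef_tail_Delta_remove _ _ uniq_L size_L t_L t_inj.
rewrite tail_cells_tuple_mono // !linearZ /= => /eqP.
rewrite !scaler_eq0 signr_eq0 Num.Theory.pnatr_eq0 eqn0Ngt prodn_gt0 => [/eqP //|v].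
by rewrite mnmDE ffact_gt0 leq_addr.
Qed.

End NewVariables.

Theorem mainTheorem4 (n k : nat) (mu : seq nat) (i j : nat) :
  is_partition mu (n + k) -> (i, j) \in ferrers mu ->
  forall P : QXY n,
    Ik n mu i j k P <->
    (forall cs : seq cell, kcells (shadow mu i j) k cs ->
       inI (n + k) (mderivm (tuple_mono n k cs) (Delta (n + k) (ferrers mu))) (embed n k P)).
Proof.
move=> part_mu _ P.
split=> [killP cs | killDelta].
  exact (inI_Delta_of_Ik n k part_mu killP).
exact (Ik_of_inI_Delta n k part_mu killDelta).
Qed.
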